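(* There exist constants $\eta>0$, $c>0$ and $N_0$ such that for every integer $N\geq N_0$ the following holds: if $\{0,1\}^N$ is partitioned into clusters such that whenever $u,v$ lie in the same cluster there are at most $\eta\cdot2^N$ points $w\in\{0,1\}^N$ with $d_H(u,w)\geq N/2$ and $d_H(v,w)\leq N/2-\sqrt N$, then the number of clusters is at least $2^{cN}$.
   Context: $d_H$ denotes the Hamming distance on $\{0,1\}^N$. *)

From mathcomp Require Import all_boot.
From Stdlib Require Import Reals.
Set Implicit Arguments. Unset Strict Implicit. Unset Printing Implicit Defensive.

Definition cube (N : nat) := {ffun 'I_N -> bool}.

Definition dH (N : nat) (u w : cube N) : nat := #|[set i | u i != w i]|.

Definition Rleb (x y : R) : bool := if Rle_dec x y then true else false.

Definition bad_set (N : nat) (u v : cube N) : {set cube N} :=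
  [set w : cube N | Rleb (INR N / 2) (INR (dH u w))
                 && Rleb (INR (dH v w)) (INR N / 2 - sqrt (INR N))].

(* Let D be the set of coordinates where u and v differ and r ~ sqrt N.  Flipping
   in v a set Y of at most |D|/2 - 2r coordinates of D and a set Z of |D^c|/2 +- r
   coordinates outside D gives a point of [bad_set u v].  If |D| > N/4, pushing the
   binomial mass of the band of width 2r below |D|/2 into the lower tail costs only a
   constant factor e^-1024, and Chebyshev's inequality handles Z, so these points fill
   a fraction e^-1024/16 of the cube.  Hence for eta = e^-1024/16 every cluster has
   Hamming diameter at most N/4, so at most 2^(7N/8) points, and there must be at
   least 2^(N/8) clusters. *)

From mathcomp Require Import all_boot.
From Stdlib Require Import Reals Lra Lia.
From mathcomp Require Import zify.
Set Implicit Arguments. Unset Strict Implicit. Unset Printing Implicit Defensive.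

Lemma sum_binS n (F : nat -> nat) :
  \sum_(k < n.+2) 'C(n.+1, k) * F k = \sum_(k < n.+1) 'C(n, k) * (F k + F k.+1).
Proof.
rewrite big_ord_recl bin0 mul1n.
under eq_bigr do rewrite /= binS mulnDl.
rewrite big_split /=.
under [in RHS]eq_bigr do rewrite mulnDr.
rewrite big_split /= addnA; congr (_ + _).
rewrite [RHS]big_ord_recl bin0 mul1n; congr (_ + _).
rewrite big_ord_recr /= bin_small // mul0n addn0.
by apply: eq_bigr => i _; rewrite /bump /=.
Qed.

Lemma sum_bin n : \sum_(k < n.+1) 'C(n, k) = expn 2 n.
Proof.
rewrite -[2]/(1 + 1) expnDn; apply: eq_bigr => k _.
by rewrite !exp1n; lia.
Qed.

Lemma sum_bin_mul2 n : \sum_(k < n.+1) 'C(n, k) * (2 * k) = n * expn 2 n.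
Proof.
elim: n => [|n IH]; first by rewrite big_ord1.
rewrite sum_binS.
have -> : \sum_(k < n.+1) 'C(n, k) * (2 * k + 2 * k.+1)
   = 2 * \sum_(k < n.+1) 'C(n, k) * (2 * k) + 2 * \sum_(k < n.+1) 'C(n, k).
  by rewrite !big_distrr -big_split /=; apply: eq_bigr => k _; lia.
by rewrite IH sum_bin expnS; lia.
Qed.

Lemma sum_bin_mul4sq n :
  \sum_(k < n.+1) 'C(n, k) * (4 * expn k 2) = n * n.+1 * expn 2 n.
Proof.
elim: n => [|n IH]; first by rewrite big_ord1.
rewrite (sum_binS n (fun k => 4 * expn k 2)).
have -> : \sum_(k < n.+1) 'C(n, k) * (4 * expn k 2 + 4 * expn k.+1 2)
   = 2 * \sum_(k < n.+1) 'C(n, k) * (4 * expn k 2)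
     + 4 * \sum_(k < n.+1) 'C(n, k) * (2 * k) + 4 * \sum_(k < n.+1) 'C(n, k).
  by rewrite !big_distrr -!big_split /=; apply: eq_bigr => k _; lia.
by rewrite IH sum_bin_mul2 sum_bin expnS; lia.
Qed.

Lemma sum_subsets_card (T : finType) (D : {set T}) (F : nat -> nat) :
  \sum_(Y : {set T} | Y \subset D) F #|Y| = \sum_(k < #|D|.+1) 'C(#|D|, k) * F k.
Proof.
rewrite (partition_big (fun Y : {set T} => (inord #|Y| : 'I_(#|D|.+1))) predT) //=.
apply: eq_bigr => k _.
transitivity (\sum_(Y in [set Y : {set T} | Y \subset D & #|Y| == k]) F k).
  apply: eq_big => Y; last by move=> /andP[YD /eqP <-]; rewrite inordK // ltnS subset_leq_card.
  rewrite inE; case YD: (Y \subset D) => //=.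
  have le_YD := subset_leq_card YD.
  by apply/eqP/eqP => [<-|E]; [rewrite inordK | apply/val_inj; rewrite /= inordK // E].
by rewrite sum_nat_const cards_draws mulnC.
Qed.

Lemma card_subsets_pred (T : finType) (D : {set T}) (p : pred nat) :
  #|[set Y : {set T} | Y \subset D & p #|Y|]| = \sum_(k < #|D|.+1) 'C(#|D|, k) * p k.
Proof.
rewrite -(sum_subsets_card D (fun k => nat_of_bool (p k))) -sum1dep_card big_mkcondr /=.
by apply: eq_bigr => Y _; case: (p _).
Qed.

Lemma leq_binS_ratio n a j :
  4 * a <= n -> n <= 2 * j.+1 + 4 * a -> 2 * (n - j) <= n + 4 * a ->
  'C(n, j.+1) * (n - 4 * a) <= 'C(n, j) * (n + 4 * a).
Proof.
move=> le4an le_n_j le_nj.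
rewrite -(@leq_pmul2r j.+1) // mulnAC [X in X * _ <= _]mulnC mul_bin_left.
have le_frac : (n - j) * (n - 4 * a) <= (n + 4 * a) * j.+1 by nia.
have := leq_mul (leqnn 'C(n, j)) le_frac.
by rewrite !mulnA (mulnC _ 'C(n, j)).
Qed.

Lemma leq_bin_shift n a k i : 4 * a <= n -> n < 2 * (k + a) -> a <= k -> i <= a ->
  'C(n, k) * expn (n - 4 * a) i <= 'C(n, k - i) * expn (n + 4 * a) i.
Proof.
move=> le4an ltn_ka le_ak; elim: i => [|i IH] lt_ia; first by rewrite !muln1 subn0.
rewrite !expnS (mulnC (n - 4 * a)) mulnA.
apply: (leq_trans (leq_mul (IH (ltnW lt_ia)) (leqnn _))).
rewrite -mulnA (mulnC _ (n - 4 * a)) mulnA.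
rewrite [X in _ <= X]mulnA [X in _ <= X * _](mulnC _ (n + 4 * a)) leq_mul2r.
have -> : k - i = (k - i.+1).+1 by lia.
by rewrite (mulnC (n + 4 * a)) leq_binS_ratio ?orbT //; lia.
Qed.

Definition lower_tail n a := \sum_(k < n.+1) 'C(n, k) * (2 * (k + a) <= n).
Definition central_band n a :=
  \sum_(k < n.+1) 'C(n, k) * ((2 * k <= n) && (n < 2 * (k + a))).

Lemma lower_half_bin n a : expn 2 n <= 2 * (lower_tail n a + central_band n a).
Proof.
have split_half : expn 2 n = \sum_(k < n.+1) 'C(n, k) * (2 * k <= n)
                           + \sum_(k < n.+1) 'C(n, k) * (n < 2 * k).
  rewrite -sum_bin -big_split /=; apply: eq_bigr => k _.
  by case: leqP => _; rewrite ?muln1 ?muln0 ?addn0.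
have -> : lower_tail n a + central_band n a = \sum_(k < n.+1) 'C(n, k) * (2 * k <= n).
  rewrite -big_split /=; apply: eq_bigr => k _; rewrite -mulnDr; congr (_ * _).
  by case: (leqP (2 * (k + a)) n); case: (leqP (2 * k) n) => /=; lia.
have upper_le_lower :
    \sum_(k < n.+1) 'C(n, k) * (n < 2 * k) <= \sum_(k < n.+1) 'C(n, k) * (2 * k <= n).
  rewrite -(big_mkord (fun _ => true) (fun k => 'C(n, k) * (n < 2 * k))).
  rewrite -(big_mkord (fun _ => true) (fun k => 'C(n, k) * (2 * k <= n))) big_nat_rev /=.
  rewrite (@eq_big_nat _ _ _ 0 n.+1 _ (fun k => 'C(n, k) * (n < 2 * (n - k)))); last first.
    by move=> k /andP[_ lt_kn]; rewrite add0n subSS bin_sub.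
  apply: leq_sum => k _.
  by case: (ltnP n (2 * (n - k))) => [lt_n|_]; rewrite ?muln0 // (_ : 2 * k <= n) //; lia.
by rewrite split_half; lia.
Qed.

(* Shifting k down by a maps the central band into the lower tail, and each
   shifted binomial coefficient loses at most a factor ((n-4a)/(n+4a))^a. *)
Lemma central_band_le n a : 4 * a <= n ->
  central_band n a * expn (n - 4 * a) a <= lower_tail n a * expn (n + 4 * a) a.
Proof.
move=> le4an.
pose band k := (2 * k <= n) && (n < 2 * (k + a)).
have shift : central_band n a * expn (n - 4 * a) a
    <= expn (n + 4 * a) a * \sum_(k < n.+1) 'C(n, k - a) * band k.
  rewrite big_distrl big_distrr /=; apply: leq_sum => k _.
  rewrite /band; case: (boolP ((2 * k <= n) && (n < 2 * (k + a)))) => /= [/andP[le_kn lt_nka]|_].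
    by rewrite !muln1 [X in _ <= X]mulnC; apply: leq_bin_shift; lia.
  by rewrite !muln0.
apply: (leq_trans shift); rewrite mulnC leq_mul2r; apply/orP; right.
rewrite -(big_mkord (fun _ => true) (fun k => 'C(n, k - a) * band k)).
rewrite (@big_cat_nat _ _ _ a) //=; last by lia.
rewrite big1_seq ?add0n; last first.
  move=> k /andP[_]; rewrite mem_index_iota => /andP[_ lt_ka].
  by rewrite /band (_ : n < 2 * (k + a) = false) ?andbF ?muln0 //; lia.
rewrite -{1}[a]add0n big_addn /lower_tail.
rewrite -(big_mkord (fun _ => true) (fun k => 'C(n, k) * (2 * (k + a) <= n))).
rewrite (@big_cat_nat _ _ _ (n.+1 - a) 0 n.+1) //=; last by lia.
apply: leq_trans (leq_addr _ _); apply: leq_sum => k _; rewrite addnK /band.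
by case: (leqP (2 * (k + a)) n) => /= _; rewrite ?muln0 // leq_mul2l leq_b1 orbT.
Qed.

Lemma lower_tail_mass n a : 4 * a <= n ->
  expn 2 n * expn (n - 4 * a) a <= 4 * lower_tail n a * expn (n + 4 * a) a.
Proof.
move=> le4an.
have band := central_band_le le4an.
have ratio_le1 : expn (n - 4 * a) a <= expn (n + 4 * a) a.
  by case: (posnP a) => [-> //|a_gt0]; rewrite leq_exp2r //; lia.
have tail_ratio := leq_mul (leqnn (lower_tail n a)) ratio_le1.
apply: (leq_trans (leq_mul (lower_half_bin n a) (leqnn _))).
move: band tail_ratio; rewrite mulnDr mulnDl; lia.
Qed.

Definition near_half s r k := (2 * k <= s + 2 * r) && (s <= 2 * k + 2 * r).

(* Chebyshev's inequality: (2k - s)^2 >= 4 r^2 off [near_half s r], and the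
   binomial variance gives sum C(s,k) (2k - s)^2 = s 2^s. *)
Lemma chebyshev_bin s r :
  4 * expn r 2 * \sum_(k < s.+1) 'C(s, k) * ~~ near_half s r k <= s * expn 2 s.
Proof.
have pointwise k : 4 * expn r 2 * ~~ near_half s r k + 2 * s * (2 * k) <= 4 * expn k 2 + expn s 2.
  rewrite /near_half.
  case: (leqP (2 * k) (s + 2 * r)); case: (leqP s (2 * k + 2 * r)) => //= *; try nia.
  have [amgm _] := nat_Cauchy (2 * k) s.
  by move: amgm; rewrite expnMn; lia.
have summed : 4 * expn r 2 * \sum_(k < s.+1) 'C(s, k) * ~~ near_half s r k
      + 2 * s * \sum_(k < s.+1) 'C(s, k) * (2 * k)
    <= \sum_(k < s.+1) 'C(s, k) * (4 * expn k 2) + expn s 2 * \sum_(k < s.+1) 'C(s, k).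
  rewrite !big_distrr -!big_split /=; apply: leq_sum => k _.
  by have := leq_mul (leqnn 'C(s, k)) (pointwise k); lia.
by move: summed; rewrite sum_bin_mul4sq sum_bin_mul2 sum_bin; nia.
Qed.

Lemma near_half_mass s r : 0 < r -> s <= r * r ->
  3 * expn 2 s <= 4 * \sum_(k < s.+1) 'C(s, k) * near_half s r k.
Proof.
move=> r_gt0 le_s_rr.
have split_mass : \sum_(k < s.+1) 'C(s, k) * near_half s r k
                  + \sum_(k < s.+1) 'C(s, k) * ~~ near_half s r k = expn 2 s.
  rewrite -sum_bin -big_split; apply: eq_bigr => k _.
  by case: (near_half s r k); rewrite /= ?muln0 ?muln1 ?addn0.
have far_small : 4 * \sum_(k < s.+1) 'C(s, k) * ~~ near_half s r k <= expn 2 s.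
  rewrite -(@leq_pmul2r (r * r)) ?muln_gt0 ?r_gt0 //.
  apply: (leq_trans _ (leq_mul (leqnn (expn 2 s)) le_s_rr)).
  by have := chebyshev_bin s r; rewrite -mulnn; lia.
lia.
Qed.

Lemma INR_expn m n : INR (expn m n) = (INR m ^ n)%R.
Proof. by elim: n => [|n IH]; rewrite ?expnS ?mult_INR ?IH. Qed.

Lemma exp_neg2_le_1m x : (0 <= x <= 1/2 -> exp (-2 * x) <= 1 - x)%R.
Proof.
move=> [x_ge0 x_le].
have := exp_ineq1_le (2 * x).
have exp_inv : (exp (-2 * x) * exp (2 * x) = 1)%R.
  by rewrite -exp_plus (_ : -2 * x + 2 * x = 0)%R ?exp_0 //; ring.
have := exp_pos (-2 * x).
nra.
Qed.

Lemma exp_le_pow_1m x n : (0 <= x <= 1/2 -> exp (-2 * x * INR n) <= (1 - x) ^ n)%R.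
Proof.
move=> x_bnd; apply: Rle_trans (pow_incr _ _ n _); last first.
  by split; [apply: Rlt_le; apply: exp_pos | apply: exp_neg2_le_1m].
rewrite -Rpower_pow; last exact: exp_pos.
by rewrite /Rpower ln_exp Rmult_comm; apply: Rle_refl.
Qed.

(* With x := 8a/(d+4a) one has d - 4a = (d+4a)(1 - x), x <= 1/2 and a x <= 8a^2/d <= 512. *)
Lemma pow_ratio_ge (d a : nat) : (16 * a <= d)%N -> (a * a <= 64 * d)%N ->
  (exp (-1024) * INR (d + 4 * a) ^ a <= INR (d - 4 * a) ^ a)%R.
Proof.
move=> /leP le16 /leP le64.
case: (posnP a) => [-> | a_gt0].
  by rewrite /= !Rmult_1_r; have := exp_increasing (-1024) 0; rewrite exp_0; lra.
have aR : (0 < INR a)%R by apply/lt_0_INR/ltP.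
have le16R : (16 * INR a <= INR d)%R by have := le_INR _ _ le16; rewrite mult_INR /=; lra.
have le64R : (INR a * INR a <= 64 * INR d)%R by have := le_INR _ _ le64; rewrite !mult_INR /=; lra.
rewrite plus_INR minus_INR; last by apply/leP; lia.
rewrite mult_INR (_ : INR 4 = 4%R); last by rewrite INR_IZR_INZ.
set y := (INR d + 4 * INR a)%R.
have y_gt0 : (0 < y)%R by rewrite /y; lra.
set x := (8 * INR a / y)%R.
have xy : (x * y = 8 * INR a)%R by rewrite /x; field; lra.
have x_bnd : (0 <= x <= 1/2)%R by rewrite /y in y_gt0 xy; split; nra.
rewrite (_ : INR d - 4 * INR a = y * (1 - x))%R; last by rewrite /x /y; field; lra.
rewrite Rpow_mult_distr Rmult_comm; apply: Rmult_le_compat_l; first by apply: pow_le; lra.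
apply: Rle_trans (exp_le_pow_1m a x_bnd); apply/Rlt_le/exp_increasing.
have xa_lt : (x * INR a < 512)%R.
  have xay : (x * INR a * y = 8 * INR a * INR a)%R by rewrite -xy; ring.
  by rewrite /y in y_gt0 xay; nra.
lra.
Qed.

Definition flip N (v : cube N) (X : {set 'I_N}) : cube N := [ffun i => (i \in X) (+) v i].

Lemma flip_inj N (v : cube N) : injective (flip v).
Proof.
move=> X X' eq_flip; apply/setP => i; have := congr1 (fun w : cube N => w i) eq_flip.
by rewrite !ffunE; case: (v i); case: (i \in X); case: (i \in X').
Qed.

Lemma dH_flip N (u v : cube N) (X : {set 'I_N}) :
  dH u (flip v X) = #|X :\: [set i | u i != v i]| + #|[set i | u i != v i] :\: X|.
Proof.
set D := [set i | u i != v i].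
have disj : (X :\: D) :&: (D :\: X) = set0.
  by apply/setP => i; rewrite !inE; case: (i \in X); rewrite ?andbF.
rewrite -cardsUI disj cards0 addn0.
apply: eq_card => i; rewrite !inE ffunE.
by case: (i \in X); case: (u i); case: (v i).
Qed.

Lemma setU_subsets_split (T : finType) (D Y Z : {set T}) :
  Y \subset D -> Z \subset ~: D -> (Y :|: Z) :&: D = Y /\ (Y :|: Z) :\: D = Z.
Proof.
move=> /subsetP YD /subsetP ZD; split; apply/setP => i; rewrite !inE;
  have := introT implyP (ZD i); have := introT implyP (YD i); rewrite inE;
  by case: (i \in Y); case: (i \in Z); case: (i \in D).
Qed.

Lemma Rleb_true x y : (x <= y)%R -> Rleb x y = true.
Proof. by rewrite /Rleb; case: Rle_dec. Qed.

Lemma mem_bad_set N (u v w : cube N) r : (N <= r * r)%N ->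
  (N <= 2 * dH u w)%N -> (2 * dH v w + 2 * r <= N)%N -> w \in bad_set u v.
Proof.
move=> /leP le_N_rr /leP far_u /leP near_v.
have sqrt_le : (sqrt (INR N) <= INR r)%R.
  rewrite -(sqrt_square (INR r)); last exact: pos_INR.
  apply: sqrt_le_1_alt.
  by rewrite -mult_INR; apply: le_INR.
have := le_INR _ _ far_u; have := le_INR _ _ near_v; rewrite -multE !plus_INR /=.
by move=> ? ?; rewrite inE !Rleb_true //; lra.
Qed.

Lemma bad_set_card_ge N (u v : cube N) r (D := [set i | u i != v i]) : (N <= r * r)%N ->
  (lower_tail #|D| (2 * r) * \sum_(k < #|~: D|.+1) 'C(#|~: D|, k) * near_half #|~: D| r k
     <= #|bad_set u v|)%N.
Proof.
move=> le_N_rr; set s := #|~: D|.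
pose lows := [set Y : {set 'I_N} | Y \subset D & 2 * (#|Y| + 2 * r) <= #|D|].
pose mids := [set Z : {set 'I_N} | Z \subset ~: D & near_half s r #|Z|].
rewrite (_ : lower_tail _ _ = #|lows|); last first.
  by rewrite (card_subsets_pred D (fun k => 2 * (k + 2 * r) <= #|D|)).
rewrite (_ : \sum_(k < s.+1) _ = #|mids|); last by rewrite (card_subsets_pred (~: D) (near_half s r)).
pose g (p : {set 'I_N} * {set 'I_N}) := flip v (p.1 :|: p.2).
rewrite -cardsX -(@card_in_imset _ _ g); last first.
  move=> [Y Z] [Y' Z']; rewrite !in_setX !inE => /andP[/andP[YD _] /andP[ZD _]].
  move=> /andP[/andP[YD' _] /andP[ZD' _]] /flip_inj eqU.
  have [capD diffD] := setU_subsets_split YD ZD.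
  have [capD' diffD'] := setU_subsets_split YD' ZD'.
  by congr pair; [rewrite -capD eqU capD' | rewrite -diffD eqU diffD'].
apply/subset_leq_card/subsetP => _ /imsetP[[Y Z] YZin ->].
rewrite in_setX !inE in YZin; case/andP: YZin => /andP[YD lowY] /andP[ZD midZ].
have [capD diffD] := setU_subsets_split YD ZD.
have dv : dH v (g (Y, Z)) = (#|Y| + #|Z|)%N.
  rewrite dH_flip (_ : [set i | v i != v i] = set0); last by apply/setP => i; rewrite !inE eqxx.
  by rewrite setD0 set0D cards0 addn0 -(cardsID D) capD diffD.
have du : dH u (g (Y, Z)) = (#|Z| + (#|D| - #|Y|))%N by rewrite dH_flip -/D diffD cardsD setIC capD.
have le_YD : (#|Y| <= #|D|)%N := subset_leq_card YD.
have sizeN : (#|D| + s = N)%N by rewrite /s cardsC card_ord.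
apply: (mem_bad_set le_N_rr); rewrite ?du ?dv; move: midZ; rewrite /near_half; lia.
Qed.

Lemma exists_sqrt_approx N : (expn 2 16 <= N)%N ->
  exists r, [/\ (N <= r * r)%N, (r * r <= 4 * N)%N & (128 * r <= N)%N].
Proof.
rewrite (_ : expn 2 16 = 256 * 256) // => N_large.
exists (Nat.sqrt N).+1; have := Nat.sqrt_spec' N.
have : (1 <= Nat.sqrt N)%coq_nat by apply/Nat.sqrt_le_square; lia.
move: (Nat.sqrt N) => q q_ge1 [sq_le lt_sq]; split; [lia | nia |].
rewrite leqNgt; apply/negP => lt_N; have : (N.+1 * N.+1 <= 128 * q.+1 * (128 * q.+1))%N.
  exact: leq_mul.
nia.
Qed.

Lemma bad_set_card_ratio N (u v : cube N) : (expn 2 16 <= N)%N -> (N < 4 * dH u v)%N ->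
  exists d a, [/\ (0 < a)%N, (16 * a <= d)%N, (a * a <= 64 * d)%N &
    (3 * expn 2 N * expn (d - 4 * a) a <= 16 * #|bad_set u v| * expn (d + 4 * a) a)%N].
Proof.
move=> N_large far_uv.
have [r [le_N_rr le_rr_4N le_128r_N]] := exists_sqrt_approx N_large.
have /= := @bad_set_card_ge N u v r le_N_rr.
rewrite /dH in far_uv; set D := [set i | u i != v i] in far_uv *.
have sizeN : (#|D| + #|~: D| = N)%N by rewrite cardsC card_ord.
move: #|D| #|~: D| far_uv sizeN => d s far_uv sizeN count.
exists d, (2 * r); split; [nia | lia | nia |].
have tail := @lower_tail_mass d (2 * r) ltac:(lia).
have mid := @near_half_mass s r ltac:(nia) ltac:(lia).
have := leq_mul tail mid; have := leq_mul count (leqnn (expn (d + 4 * (2 * r)) (2 * r))).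
have split2N : expn 2 N = expn 2 d * expn 2 s by rewrite -expnD sizeN.
rewrite split2N; set T := lower_tail _ _; set M := \sum_(k < s.+1) _; set B := #|_|; lia.
Qed.

Lemma bad_set_large N (u v : cube N) : (expn 2 16 <= N)%N -> (N < 4 * dH u v)%N ->
  (exp (-1024) / 16 * 2 ^ N < INR #|bad_set u v|)%R.
Proof.
move=> N_large /(bad_set_card_ratio N_large) [d [a [a_gt0 le16 le64 +]]].
move/leP/le_INR; rewrite !mult_INR !INR_expn.
have [-> -> ->] : [/\ INR 2 = 2, INR 3 = 3 & INR 16 = 16]%R by split; rewrite INR_IZR_INZ.
have := pow_ratio_ge le16 le64.
set y := (INR (d - _) ^ _)%R; set z := (INR (d + _) ^ _)%R; set B := INR #|_| => ratio count.
have z_gt0 : (0 < z)%R by apply/pow_lt/lt_0_INR/ltP; lia.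
have P_gt0 : (0 < 2 ^ N)%R by apply: pow_lt; lra.
have scaled : (3 * 2 ^ N * exp (-1024) * z <= 16 * B * z)%R.
  by have := Rmult_le_compat_l (3 * 2 ^ N) _ _ ltac:(lra) ratio; lra.
have := Rmult_le_reg_r z _ _ z_gt0 scaled.
have := Rmult_lt_0_compat _ _ P_gt0 (exp_pos (-1024)).
lra.
Qed.

(* Each coordinate contributes 3 if it agrees with u0 and 1 otherwise. *)
Lemma sum_expn_agree N (u0 : cube N) : \sum_(w : cube N) expn 3 (N - dH u0 w) = expn 4 N.
Proof.
transitivity (\sum_(w : cube N) \prod_(i < N) (if w i == u0 i then 3 else 1)).
  apply: eq_bigr => w _; rewrite -big_mkcond /=.
  have -> : \prod_(i < N | w i == u0 i) 3 = \prod_(i in [set i | w i == u0 i]) 3.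
    by apply: eq_bigl => i; rewrite inE.
  rewrite prod_nat_const cardsCs card_ord /dH; congr (expn 3 (N - _)).
  by apply: eq_card => i; rewrite !inE eq_sym.
rewrite /cube -(bigA_distr_bigA (fun i (b : bool) => if b == u0 i then 3 else 1)) /=.
rewrite (eq_bigr (fun _ => 4)) => [|i _]; last by rewrite big_bool /=; case: (u0 i).
by rewrite prod_nat_const card_ord.
Qed.

Lemma card_quarter_diameter N (C : {set cube N}) :
  (forall u v, u \in C -> v \in C -> 4 * dH u v <= N)%N -> (expn #|C| 8 <= expn 2 (7 * N))%N.
Proof.
move=> diamC; have [u0 u0C | C0] := pickP (mem C); last by rewrite (eq_card0 C0) exp0n.
set k := N - N %/ 4.
have ball : (#|C| * expn 3 k <= expn 4 N)%N.
  rewrite -(sum_expn_agree u0) -sum_nat_const [X in _ <= X](bigID (mem C)) /=.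
  apply: leq_trans (leq_addr _ _); apply: leq_sum => w wC.
  apply: leq_pexp2l => //; have := diamC _ _ u0C wC.
  by rewrite /k mulnC -leq_divRL //; lia.
have k8 : (6 * N <= 8 * k)%N by have := leq_divM N 4; rewrite /k; lia.
have ball8 : (expn #|C| 8 * expn 3 (8 * k) <= expn 2 (16 * N))%N.
  have -> : expn 3 (8 * k) = expn (expn 3 k) 8 by rewrite mulnC expnM.
  have -> : expn 2 (16 * N) = expn (expn 4 N) 8.
    by rewrite -expnM (_ : 4 = expn 2 2) // -expnM; congr expn; lia.
  by rewrite -expnMn leq_exp2r.
have pow3 : (expn 2 (9 * N) <= expn 3 (8 * k))%N.
  apply: leq_trans (leq_pexp2l (isT : 0 < 3) k8).
  by case: (posnP N) => [-> // | N_gt0]; rewrite !expnM leq_exp2r.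
rewrite -(@leq_pmul2r (expn 2 (9 * N))) ?expn_gt0 // -expnD -[7 * N + _]mulnDl.
exact: leq_trans (leq_mul (leqnn _) pow3) ball8.
Qed.

Lemma card_partition_expn_le (T : finType) (P : {set {set T}}) k m : (0 < k)%N ->
  partition P [set: T] -> (forall C, C \in P -> expn #|C| k <= m)%N ->
  (expn #|T| k <= expn #|P| k * m)%N.
Proof.
move=> k_gt0 partP small; set M := \max_(C in P) #|C|.
have cardT : (#|T| <= #|P| * M)%N.
  rewrite -cardsT (card_partition partP) -sum_nat_const.
  by apply: leq_sum => C CP; apply: leq_bigmax_cond.
have maxM : (expn M k <= m)%N.
  apply: (big_ind (fun x => expn x k <= m)%N) => [|x y le_x le_y|C CP]; last exact: small.
  - by rewrite exp0n.
  - by rewrite /maxn; case: ltnP.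
by apply: leq_trans (leq_mul (leqnn _) maxM); rewrite -expnMn leq_exp2r.
Qed.

Lemma quarter_diameter_partition_card N (P : {set {set cube N}}) :
  partition P [set: cube N] ->
  (forall C u v, C \in P -> u \in C -> v \in C -> 4 * dH u v <= N)%N ->
  (expn 2 N <= expn #|P| 8)%N.
Proof.
move=> partP diamP.
have := card_partition_expn_le (isT : 0 < 8) partP
  (fun C CP => card_quarter_diameter (fun u v => diamP C u v CP)).
rewrite card_ffun card_bool card_ord -expnM (_ : N * 8 = N + 7 * N); last by lia.
by rewrite expnD leq_pmul2r // expn_gt0.
Qed.

Lemma Rpower_le_of_pow_le (b x : R) (m n : nat) : (0 < b)%R -> (0 < x)%R -> (0 < n)%N ->
  (b ^ m <= x ^ n)%R -> (Rpower b (INR m / INR n) <= x)%R.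
Proof.
move=> b_gt0 x_gt0 n_gt0 le_pow.
have n_neq0 : INR n <> 0%R by apply: not_0_INR; lia.
have inv_ge0 : (0 <= / INR n)%R by apply/Rlt_le/Rinv_0_lt_compat/lt_0_INR/ltP; lia.
have := Rle_Rpower_l _ _ _ inv_ge0 (conj (pow_lt _ m b_gt0) le_pow).
rewrite -!Rpower_pow // !Rpower_mult Rinv_r // Rpower_1 //.
Qed.

Theorem lemma5p7 :
  exists (eta c : R) (N0 : nat), (0 < eta)%R /\ (0 < c)%R /\
    forall (N : nat), (N0 <= N)%N ->
    forall (P : {set {set cube N}}),
      partition P [set: cube N] ->
      (forall (C : {set cube N}) (u v : cube N),
          C \in P -> u \in C -> v \in C ->
          (INR #|bad_set u v| <= eta * 2 ^ N)%R) ->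
      (Rpower 2 (c * INR N) <= INR #|P|)%R.
Proof.
exists (exp (-1024) / 16)%R, (1 / 8)%R, (expn 2 16).
split; first by apply: Rdiv_lt_0_compat; [apply: exp_pos | lra].
split=> [|N N_large P partP small_bad]; first lra.
have le_pow : (expn 2 N <= expn #|P| 8)%N.
  apply: quarter_diameter_partition_card partP _ => C u v CP uC vC.
  rewrite leqNgt; apply/negP => /(bad_set_large N_large).
  by have := small_bad C u v CP uC vC; lra.
have P_gt0 : (0 < #|P|)%N.
  by move: le_pow; case: #|P| => //; rewrite exp0n // leqn0 expn_eq0.
rewrite (_ : 1 / 8 * INR N = INR N / INR 8)%R; last by rewrite (_ : INR 8 = 8%R) ?INR_IZR_INZ //; field.
apply: Rpower_le_of_pow_le; [lra | exact/lt_0_INR/ltP | by [] |].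
by rewrite -[2%R]/(INR 2) -!INR_expn; apply/le_INR/leP.
Qed.
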